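(* Let $(R,\mathfrak m)$ be a Noetherian local ring, $X$ a finitely generated $R$-module, $N$ a Burch submodule of $X$, $t\ge1$ an integer, and $M$ a finitely generated $R$-module with $\operatorname{Tor}_t^R(M,X/N)=\operatorname{Tor}_{t+1}^R(M,X/N)=0$. Then $\operatorname{pd}_R M<t$. (In particular, for $X=R$: if $I$ is an ideal with $\mathfrak m I:_R\mathfrak m\neq I:_R\mathfrak m$ and $\operatorname{Tor}_t^R(R/I,M)=\operatorname{Tor}_{t+1}^R(R/I,M)=0$ for some $t\ge1$, then $\operatorname{pd}_RM<t$.)
   Context: For a submodule $N\subseteq X$, $(N:_X\mathfrak m)=\{x\in X:\mathfrak m x\subseteq N\}$. $N$ is a Burch submodule of $X$ if $\mathfrak m(N:_X\mathfrak m)\neq\mathfrak m N$. The projective dimension of the zero module is $-\infty$. *)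

From HB Require Import structures.
From mathcomp Require Import all_boot all_order all_algebra.
Set Implicit Arguments. Unset Strict Implicit. Unset Printing Implicit Defensive.
Import Order.TTheory GRing.Theory Num.Theory.
Local Open Scope ring_scope.

Section CommAlg.
Variable R : comNzRingType.

Definition is_unit (a : R) : Prop := exists b : R, a * b = 1.
Definition maxid (a : R) : Prop := ~ is_unit a.

Definition ideal (I : R -> Prop) : Prop :=
  I 0 /\ (forall a b, I a -> I b -> I (a + b)) /\ (forall r a, I a -> I (r * a)).

Definition noetherian : Prop :=
  forall I : R -> Prop, ideal I ->
    exists n (g : 'I_n -> R), forall x, I x <-> exists c : 'I_n -> R, x = \sum_i c i * g i.

(* local (R is nonzero since comNzRingType = comNzRingType): the non-units
   form an ideal, which is then the unique maximal ideal m *)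
Definition local_ring : Prop := ideal maxid.

Variable X : lmodType R.

Definition fin_gen : Prop :=
  exists n (g : 'I_n -> X), forall x, exists c : 'I_n -> R, x = \sum_i c i *: g i.

Definition submodule (N : X -> Prop) : Prop :=
  N 0 /\ (forall x y, N x -> N y -> N (x + y)) /\ (forall r x, N x -> N (r *: x)).

Definition colon_m (N : X -> Prop) : X -> Prop :=
  fun x => forall a, maxid a -> N (a *: x).

Definition m_times (S : X -> Prop) : X -> Prop :=
  fun x => exists n (a : 'I_n -> R) (s : 'I_n -> X),
    (forall i, maxid (a i) /\ S (s i)) /\ x = \sum_i a i *: s i.

Definition burch (N : X -> Prop) : Prop :=
  ~ (forall x, m_times (colon_m N) x <-> m_times N x).

End CommAlg.

(* Free resolutions by finitely generated free modules R^(rk i)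
   (elements are row vectors, differentials act by right multiplication):
     ... -> R^(rk 2) --dmx 1--> R^(rk 1) --dmx 0--> R^(rk 0) --eps--> M -> 0 *)
Record free_res (R : comNzRingType) (M : lmodType R) := FreeRes {
  rk : nat -> nat;
  dmx : forall i, 'M[R]_(rk i.+1, rk i);
  gen : 'I_(rk 0) -> M;
  eps_surj : forall x : M, exists v : 'rV[R]_(rk 0), x = \sum_j v 0 j *: gen j;
  exact0 : forall v : 'rV[R]_(rk 0),
      \sum_j v 0 j *: gen j = 0 <-> exists w : 'rV[R]_(rk 1), v = w *m dmx 0;
  exactS : forall i (v : 'rV[R]_(rk i.+1)),
      v *m dmx i = 0 <-> exists w : 'rV[R]_(rk i.+2), v = w *m dmx i.+1
}.

Section Tor.
Variables (R : comNzRingType) (M X : lmodType R) (F : free_res M).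

Definition bd i (x : 'I_(rk F i.+1) -> X) : 'I_(rk F i) -> X :=
  fun j => \sum_k dmx F i k j *: x k.

(* cycles of F (x) (X/N) in degree t, represented in X^(rk t) modulo N *)
Definition is_cycle (N : X -> Prop) (t : nat) : ('I_(rk F t) -> X) -> Prop :=
  match t return ('I_(rk F t) -> X) -> Prop with
  | 0 => fun _ => True
  | s.+1 => fun x => forall j, N (bd x j)
  end.

Definition tor_vanish (N : X -> Prop) (t : nat) : Prop :=
  forall x : 'I_(rk F t) -> X, is_cycle N x ->
    exists z : 'I_(rk F t.+1) -> X, forall k, N (x k - bd z k).

End Tor.

(* pd_R M < t : M has a (finite free) resolution with F_i = 0 for i >= t.
   (pd of the zero module is -oo < t, consistent with this.) *)
Definition pd_lt (R : comNzRingType) (M : lmodType R) (t : nat) : Prop :=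
  exists F : free_res M, forall i, (t <= i)%N -> rk F i = 0%N.

(* Take a minimal free resolution F of M: it exists because syzygies over a
   Noetherian ring are finitely generated, and a generating family can be
   shrunk until all its relations have coefficients in m.  If F_t <> 0, put
   y in (N :_X m) in one coordinate of F_t (x) X; as the differentials have
   entries in m this is a cycle of F (x) X/N, and the vanishing of Tor_t and
   Tor_(t+1) writes a y, for every a in m, as an element of m N.  Thus
   m (N :_X m) = m N, against the Burch hypothesis, so F_t = 0, and then
   F_i = 0 for all i >= t by minimality and Nakayama. *)

From HB Require Import structures.
From mathcomp Require Import all_boot all_order all_algebra.
From Stdlib Require Import Classical ClassicalEpsilon.
Set Implicit Arguments. Unset Strict Implicit. Unset Printing Implicit Defensive.
Import GRing.Theory.
Local Open Scope ring_scope.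

Definition catf (T : Type) m1 m2 (f1 : 'I_m1 -> T) (f2 : 'I_m2 -> T)
    (i : 'I_(m1 + m2)) : T :=
  match split i with inl k => f1 k | inr k => f2 k end.

Section Spans.
Variables (R : comNzRingType) (V : lmodType R).
Implicit Types (S T : V -> Prop) (x y : V).

Definition spans S m (g : 'I_m -> V) : Prop :=
  forall x, S x <-> exists c : 'I_m -> R, x = \sum_i c i *: g i.

Definition fg_submod S : Prop := exists m (g : 'I_m -> V), spans S g.

Definition minimal_family m (g : 'I_m -> V) : Prop :=
  forall c : 'I_m -> R, \sum_i c i *: g i = 0 -> forall j, maxid (c j).

Lemma sum_indicator m (g : 'I_m -> V) j : \sum_i (i == j)%:R *: g i = g j.
Proof.
rewrite (bigD1 j) //= eqxx scale1r big1 ?addr0 // => i /negbTE ->.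
by rewrite scale0r.
Qed.

Lemma spans_mem S m (g : 'I_m -> V) j : spans S g -> S (g j).
Proof.
by move=> Sg; apply/Sg; exists (fun i => (i == j)%:R); rewrite sum_indicator.
Qed.

Lemma submodule_sum S m (c : 'I_m -> R) (g : 'I_m -> V) :
  submodule S -> (forall i, S (g i)) -> S (\sum_i c i *: g i).
Proof. by move=> [S0 [SD SZ]] Sg; apply: (big_ind S) => // i _; apply: SZ. Qed.

Lemma submoduleB S x y : submodule S -> S x -> S y -> S (x - y).
Proof.
by move=> [_ [SD SZ]] Sx Sy; apply: SD => //; rewrite -scaleN1r; apply: SZ.
Qed.

Lemma submoduleI S T : submodule S -> submodule T -> submodule (fun x => S x /\ T x).
Proof.
move=> [S0 [SD SZ]] [T0 [TD TZ]]; split; [by []|split].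
- by move=> x y [Sx Tx] [Sy Ty]; split; [apply: SD | apply: TD].
- by move=> r x [Sx Tx]; split; [apply: SZ | apply: TZ].
Qed.

Lemma spans_drop_unit S m (g : 'I_m.+1 -> V) (c : 'I_m.+1 -> R) j :
  spans S g -> is_unit (c j) -> \sum_i c i *: g i = 0 ->
  spans S (fun i => g (lift j i)).
Proof.
move=> Sg [b cjb] rel x; split; last first.
  move=> [d ->]; apply/Sg; exists (fun i => if unlift j i is Some k then d k else 0).
  rewrite (bigD1_ord j) //= unlift_none scale0r add0r.
  by apply: eq_bigr => i _; rewrite liftK.
move=> /Sg [d ->].
have gj : g j = - \sum_i (b * c (lift j i)) *: g (lift j i).
  move: rel; rewrite (bigD1_ord j) //= => /(congr1 (fun v => b *: v)).
  rewrite scaler0 scalerDr scalerA mulrC cjb scale1r scaler_sumr => /eqP.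
  rewrite addr_eq0 => /eqP ->; congr (- _); apply: eq_bigr => i _; exact: scalerA.
exists (fun i => d (lift j i) - d j * (b * c (lift j i))).
rewrite (bigD1_ord j) //= gj scalerN scaler_sumr -sumrN -big_split /=.
by apply: eq_bigr => i _; rewrite scalerBl scalerA addrC.
Qed.

Lemma exists_minimal_spans S m (g : 'I_m -> V) :
  spans S g -> exists m' (g' : 'I_m' -> V), spans S g' /\ minimal_family g'.
Proof.
move: m g; apply: ltn_ind => m IH g Sg.
have [|] := classic (minimal_family g); first by exists m, g.
move=> /not_all_ex_not [c nc].
have {nc} [rel /not_all_ex_not [j ncj]] := imply_to_and _ _ nc.
have {ncj} cj : is_unit (c j) by apply: NNPP.
case: m IH g Sg c rel j cj => [|m] IH g Sg c rel j cj; first by case: j cj.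
exact: IH m (ltnSn m) _ (spans_drop_unit Sg cj rel).
Qed.

Lemma sum_catf m1 m2 (c1 : 'I_m1 -> R) (c2 : 'I_m2 -> R)
    (g1 : 'I_m1 -> V) (g2 : 'I_m2 -> V) :
  \sum_i catf c1 c2 i *: catf g1 g2 i = \sum_i c1 i *: g1 i + \sum_i c2 i *: g2 i.
Proof.
rewrite big_split_ord /catf; congr (_ + _); apply: eq_bigr => i _.
  by rewrite (unsplitK (inl _ : 'I_m1 + 'I_m2)).
by rewrite (unsplitK (inr _ : 'I_m1 + 'I_m2)).
Qed.

End Spans.

Section LinearImage.
Variables (R : comNzRingType) (V W : lmodType R) (p : {linear V -> W}).
Implicit Type S : V -> Prop.

Lemma submodule_ker : submodule (fun v => p v = 0).
Proof.
split; first exact: linear0.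
split=> [u v pu pv | r v pv]; first by rewrite linearD pu pv addr0.
by rewrite linearZ_LR pv scaler0.
Qed.

Lemma submodule_image S :
  submodule S -> submodule (fun w => exists v, S v /\ p v = w).
Proof.
move=> [S0 [SD SZ]]; split; first by exists 0; rewrite linear0.
split=> [w1 w2 [u [Su <-]] [v [Sv <-]] | r w [v [Sv <-]]].
  by exists (u + v); rewrite linearD; split; first exact: SD.
by exists (r *: v); rewrite linearZ_LR; split; first exact: SZ.
Qed.

(* [S] is generated by lifts of generators of [p(S)] together with the
   generators of [S :&: ker p]. *)
Lemma fg_submod_ext S : submodule S ->
  fg_submod (fun w => exists v, S v /\ p v = w) ->
  fg_submod (fun v => S v /\ p v = 0) -> fg_submod S.
Proof.
move=> SS [m1 [h Sh]] [m2 [g Sg]].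
have /fin_all_exists [u Su] : forall i, exists v, S v /\ p v = h i.
  by move=> i; exact: spans_mem Sh.
exists (m1 + m2)%N, (catf u g) => x; split; last first.
  move=> [c ->]; apply: submodule_sum SS _ => i; rewrite /catf.
  by case: split => k; [case: (Su k) | case: (spans_mem k Sg)].
move=> Sx; have [c1 pxE] := (Sh (p x)).1 (ex_intro _ x (conj Sx erefl)).
have Kx : S (x - \sum_i c1 i *: u i) /\ p (x - \sum_i c1 i *: u i) = 0.
  split; first by apply: submoduleB SS Sx (submodule_sum _ SS (fun i => (Su i).1)).
  rewrite linearB linear_sum pxE; apply/eqP; rewrite subr_eq0; apply/eqP.
  by apply: eq_bigr => i _; rewrite linearZ_LR (Su i).2.
have [c2 xE] := (Sg _).1 Kx.
by exists (catf c1 c2); rewrite sum_catf -xE addrC subrK.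
Qed.

End LinearImage.

Section NoetherianRows.
Variable R : comNzRingType.
Hypothesis noethR : noetherian R.

(* A submodule of [R^(1+n)] inside [R^1 x 0] is [I e_0] for an ideal [I] of [R]. *)
Lemma fg_submod_ker_rsubmx n (T : 'rV[R]_(1 + n) -> Prop) :
  submodule T -> (forall v, T v -> rsubmx v = 0) -> fg_submod T.
Proof.
move=> ST Tr; pose e0 : 'rV[R]_(1 + n) := row_mx 1%:M 0.
have TE v : T v -> v = lsubmx v 0 0 *: e0.
  move=> Tv; rewrite scale_row_mx scaler0 scalemx1 -mx11_scalar -(Tr v Tv).
  by rewrite hsubmxK.
pose I a := T (a *: e0).
have idI : ideal I.
  case: ST => [T0 [TD TZ]]; split; first by rewrite /I scale0r.
  split=> [a b Ia Ib | r a Ia]; first by rewrite /I scalerDl; exact: TD.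
  by rewrite /I -scalerA; exact: TZ.
have [q [c Ic]] : fg_submod (V := R^o) I := noethR idI.
exists q, (fun l => c l *: e0) => v; split.
  move=> Tv; have Iv : I (lsubmx v 0 0) by rewrite /I -TE.
  have [d vE] := (Ic _).1 Iv.
  exists d; rewrite {1}(TE v Tv) vE scaler_suml.
  by apply: eq_bigr => l _; rewrite scalerA.
by move=> [d ->]; apply: submodule_sum ST _ => l; exact: spans_mem Ic.
Qed.

Lemma noetherian_rV_fg n (S : 'rV[R]_n -> Prop) : submodule S -> fg_submod S.
Proof.
elim: n S => [|n IH] S SS.
  exists 0%N, (fun=> 0) => v; rewrite thinmx0; split=> _; last by case: SS.
  by exists (fun=> 0); rewrite big_ord0.
apply: (@fg_submod_ext _ _ _ (@rsubmx R 1 1 n) (S : 'rV_(1 + n) -> Prop) SS).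
  by apply: IH; exact: submodule_image.
apply: fg_submod_ker_rsubmx => [|v []//].
exact: submoduleI SS (submodule_ker _).
Qed.

End NoetherianRows.

Section MinimalGenerators.
Variable R : comNzRingType.
Hypothesis noethR : noetherian R.

Definition mingen n (S : 'rV[R]_n -> Prop) m (G : 'M[R]_(m, n)) : Prop :=
  (forall v, S v <-> exists w : 'rV_m, v = w *m G) /\
  (forall w : 'rV_m, w *m G = 0 -> forall j, maxid (w 0 j)).

Lemma exists_mingen n (S : 'rV[R]_n -> Prop) :
  submodule S -> exists m (G : 'M_(m, n)), mingen S G.
Proof.
move=> SS; have [m0 [g0 Sg0]] := noetherian_rV_fg noethR SS.
have [m [g [Sg ming]]] := exists_minimal_spans Sg0.
exists m, (\matrix_i g i); split=> [v | w].
  rewrite Sg; split=> [[c ->] | [w ->]].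
    exists (\row_i c i); rewrite mulmx_sum_row.
    by apply: eq_bigr => i _; rewrite rowK mxE.
  by exists (fun i => w 0 i); rewrite mulmx_sum_row; under eq_bigr do rewrite rowK.
by rewrite mulmx_sum_row; under eq_bigr do rewrite rowK; exact: ming.
Qed.

Definition mingens n (S : 'rV[R]_n -> Prop) : {m : nat & 'M[R]_(m, n)} :=
  epsilon (inhabits (existT (fun m => 'M[R]_(m, n)) 0%N 0))
    (fun G => mingen S (projT2 G)).

Lemma mingensP n (S : 'rV[R]_n -> Prop) :
  submodule S -> mingen S (projT2 (mingens S)).
Proof.
move=> SS; have [m [G SG]] := exists_mingen SS.
pose P (G : {m : nat & 'M[R]_(m, n)}) := mingen S (projT2 G).
by apply: (@epsilon_spec _ _ P); exists (existT _ m G).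
Qed.

(* [syz K0 i] is the i-th syzygy module of a module presented with relation
   module [K0], together with the rank of the free module containing it. *)
Fixpoint syz n0 (K0 : 'rV[R]_n0 -> Prop) i : {n : nat & 'rV[R]_n -> Prop} :=
  if i is i'.+1 then
    let G := mingens (projT2 (syz K0 i')) in
    existT _ (projT1 G) (fun v => v *m projT2 G = 0)
  else existT _ n0 K0.

Lemma submodule_syz n0 (K0 : 'rV[R]_n0 -> Prop) i :
  submodule K0 -> submodule (projT2 (syz K0 i)).
Proof. by case: i => [|i] //= _; exact: submodule_ker (mulmxr _). Qed.

End MinimalGenerators.

Section Combination.
Variables (R : comNzRingType) (M : lmodType R) (n : nat) (g : 'I_n -> M).

Definition lin_comb (v : 'rV[R]_n) : M := \sum_j v 0 j *: g j.

Fact lin_comb_is_linear : linear lin_comb.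
Proof.
move=> a u v; rewrite /lin_comb scaler_sumr -big_split; apply: eq_bigr => j _.
by rewrite !mxE scalerDl scalerA.
Qed.

HB.instance Definition _ :=
  GRing.isLinear.Build R 'rV[R]_n M *:%R lin_comb lin_comb_is_linear.

End Combination.

Definition minimal_res (R : comNzRingType) (M : lmodType R) (F : free_res M) : Prop :=
  forall i k j, maxid (dmx F i k j).

Lemma exists_minimal_res (R : comNzRingType) (M : lmodType R) :
  noetherian R -> fin_gen M -> exists F : free_res M, minimal_res F.
Proof.
move=> noethR [n [g Mg]].
have [n0 [g0 [Mg0 ming0]]] :
    exists n0 (g0 : 'I_n0 -> M), spans (fun=> True) g0 /\ minimal_family g0.
  by apply: (exists_minimal_spans (g := g)) => x; split=> // _; exact: Mg.
pose K0 v := lin_comb g0 v = 0.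
have SK0 : submodule K0 := submodule_ker (lin_comb g0).
pose G i := mingens (projT2 (syz K0 i)).
have GP i : mingen (projT2 (syz K0 i)) (projT2 (G i)).
  exact: (@mingensP R noethR _ _ (submodule_syz i SK0)).
have surj x : exists v : 'rV_n0, x = \sum_j v 0 j *: g0 j.
  have [c ->] := (Mg0 x).1 I; exists (\row_j c j).
  by apply: eq_bigr => j _; rewrite mxE.
pose F := @FreeRes R M (fun i => projT1 (syz K0 i)) (fun i => projT2 (G i)) g0 surj
  (fun v => (GP 0%N).1 v) (fun i v => (GP i.+1).1 v).
have syz_maxid i v : projT2 (syz K0 i) v -> forall j, maxid (v 0 j).
  by case: i v => [|i] v /= Kv j; [exact: ming0 Kv j | exact: (GP i).2 v Kv j].
exists F => i k j.
have rowG : projT2 (syz K0 i) (row k (projT2 (G i))).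
  by apply/(GP i).1; exists (delta_mx 0 k); exact: rowE.
by have := syz_maxid i _ rowG j; rewrite mxE.
Qed.

Section MaximalIdealProducts.
Variables (R : comNzRingType) (X : lmodType R).
Implicit Types (S T N : X -> Prop) (x y : X).

Lemma m_times0 S : m_times S 0.
Proof. by exists 0%N, (fun=> 0), (fun=> 0); split; [case | rewrite big_ord0]. Qed.

Lemma m_timesD S x y : m_times S x -> m_times S y -> m_times S (x + y).
Proof.
move=> [p [a [s [Sas ->]]]] [q [b [u [Sbu ->]]]].
exists (p + q)%N, (catf a b), (catf s u); rewrite sum_catf; split=> // i.
by rewrite /catf; case: split.
Qed.

Lemma m_timesZ S a x : maxid a -> S x -> m_times S (a *: x).
Proof. by move=> ma Sx; exists 1%N, (fun=> a), (fun=> x); rewrite big_ord1. Qed.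

Lemma m_times_sum S I (r : seq I) (f : I -> X) :
  (forall i, m_times S (f i)) -> m_times S (\sum_(i <- r) f i).
Proof.
by move=> Sf; apply: (big_ind (m_times S)); [exact: m_times0 | exact: m_timesD |].
Qed.

Lemma m_times_sub S T x : (forall y, S y -> T y) -> m_times S x -> m_times T x.
Proof.
move=> ST [p [a [s [Sas ->]]]]; exists p, a, s; split=> // i.
by case: (Sas i) => ma Ss; split; last exact: ST.
Qed.

Lemma colon_m_sub N x : submodule N -> N x -> colon_m N x.
Proof. by move=> [_ [_ NZ]] Nx a _; exact: NZ. Qed.

Lemma not_burch N : submodule N ->
  (forall a y, maxid a -> colon_m N y -> m_times N (a *: y)) -> ~ burch N.
Proof.
move=> SN mcolon; apply=> x; split.
  move=> [p [a [s [Sas ->]]]]; apply: m_times_sum => i.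
  by case: (Sas i); exact: mcolon.
by apply: m_times_sub => y; exact: colon_m_sub.
Qed.

End MaximalIdealProducts.

Section MinimalResolutionTor.
Variables (R : comNzRingType) (M X : lmodType R) (F : free_res M).
Variable N : X -> Prop.
Hypotheses (SN : submodule N) (minF : minimal_res F).

Lemma dmxK i : dmx F i.+1 *m dmx F i = 0.
Proof.
apply/row_matrixP => k; rewrite row_mul row0.
by apply/exactS; exists (delta_mx 0 k); exact: rowE.
Qed.

Lemma bdK i (x : 'I_(rk F i.+2) -> X) j : bd (bd x) j = 0.
Proof.
rewrite /bd; under eq_bigr do rewrite scaler_sumr.
rewrite exchange_big big1 //= => k _.
under eq_bigr do rewrite scalerA; rewrite -scaler_suml.
suff -> : \sum_l dmx F i l j * dmx F i.+1 k l = 0 by rewrite scale0r.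
have /matrixP/(_ k j) := dmxK i; rewrite !mxE => dd0; rewrite -[RHS]dd0.
by apply: eq_bigr => l _; rewrite mulrC.
Qed.

Lemma bdZ i a (x : 'I_(rk F i.+1) -> X) j : bd (fun k => a *: x k) j = a *: bd x j.
Proof. by rewrite /bd scaler_sumr; apply: eq_bigr => k _; rewrite !scalerA mulrC. Qed.

Lemma bdB i (x y : 'I_(rk F i.+1) -> X) j :
  bd (fun k => x k - y k) j = bd x j - bd y j.
Proof. by rewrite /bd -sumrB; apply: eq_bigr => k _; rewrite scalerBr. Qed.

Lemma bd_colon_m i (x : 'I_(rk F i.+1) -> X) j :
  (forall k, colon_m N (x k)) -> N (bd x j).
Proof.
case: SN => [N0 [ND _]] Nx; apply: (big_ind N) => // k _.
exact: Nx k _ (@minF i k j).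
Qed.

Lemma bd_m_times (S : X -> Prop) i (x : 'I_(rk F i.+1) -> X) j :
  (forall k, S (x k)) -> m_times S (bd x j).
Proof.
by move=> Sx; apply: m_times_sum => k; exact: m_timesZ (@minF i k j) (Sx k).
Qed.

(* Put [y] in a coordinate [e] of [F_(s+1)]: vanishing of Tor in degree
   [s+1] lifts it to [z] in degree [s+2], vanishing in degree [s+2] lifts
   [a z] to [w] in degree [s+3], and [a y] is read off modulo [bd (bd w) = 0]. *)
Lemma colon_m_times_tor s (e : 'I_(rk F s.+1)) a y :
  tor_vanish F N s.+1 -> tor_vanish F N s.+2 ->
  maxid a -> colon_m N y -> m_times N (a *: y).
Proof.
move=> tor1 tor2 ma Cy.
pose x k := if k == e then y else 0.
have Cx k : colon_m N (x k).
  by rewrite /x; case: eqP => _ //; apply: colon_m_sub SN _; case: SN.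
have [z Nz] := tor1 x (fun j => bd_colon_m j Cx).
pose az k := a *: z k.
have Naz k : N (bd az k).
  rewrite bdZ -[bd z k](subKr (x k)) scalerBr.
  by apply: submoduleB SN (Cx k a ma) _; case: SN => [_ [_ NZ]]; exact: NZ.
have [w Nw] := tor2 az Naz.
have -> : a *: y = a *: (x e - bd z e) + bd (fun l => az l - bd w l) e.
  by rewrite bdB bdK subr0 bdZ -scalerDr subrK /x eqxx.
by apply: m_timesD; [exact: m_timesZ ma (Nz e) | exact: bd_m_times].
Qed.

Lemma tor_vanish_rk0 s : burch N ->
  tor_vanish F N s.+1 -> tor_vanish F N s.+2 -> rk F s.+1 = 0%N.
Proof.
move=> BN tor1 tor2; case E: (rk F s.+1) => [//|r]; exfalso.
apply: (not_burch SN) BN => a y.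
exact: (colon_m_times_tor (cast_ord (esym E) ord0) tor1 tor2).
Qed.

End MinimalResolutionTor.

Section LocalRing.
Variable R : comNzRingType.
Hypothesis locR : local_ring R.

Lemma not_maxid1 : ~ maxid (1 : R).
Proof. by apply; exists 1; rewrite mulr1. Qed.

Lemma maxid_sum_mul n (c d : 'I_n -> R) :
  (forall k, maxid (d k)) -> maxid (\sum_k c k * d k).
Proof.
case: locR => [m0 [mD mM]] md; apply: (big_ind (@maxid R)) => // k _; exact: mM.
Qed.

(* Nakayama in its simplest form: a nonzero free module is not its own
   [m]-multiple. *)
Lemma minimal_res_rk0S (M : lmodType R) (F : free_res M) i :
  minimal_res F -> rk F i = 0%N -> rk F i.+1 = 0%N.
Proof.
move=> minF rk0; case E: (rk F i.+1) => [//|r]; exfalso.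
pose e := cast_ord (esym E) ord0.
have [w eE] : exists w : 'rV_(rk F i.+2), delta_mx 0 e = w *m dmx F i.+1.
  by apply/exactS; apply/rowP => j; have := ltn_ord j; rewrite [X in (_ < X)%N]rk0.
have e1 : 1 = \sum_k w 0 k * dmx F i.+1 k e.
  by have /matrixP/(_ 0 e) := eE; rewrite !mxE !eqxx.
by apply: not_maxid1; rewrite e1; apply: maxid_sum_mul => k; exact: minF.
Qed.

Lemma minimal_res_rk0_ge (M : lmodType R) (F : free_res M) i j :
  minimal_res F -> rk F i = 0%N -> (i <= j)%N -> rk F j = 0%N.
Proof.
move=> minF rk0 /subnK <-; elim: (j - i)%N => [|k IH]; first by rewrite add0n.
by rewrite addSn; exact: minimal_res_rk0S.
Qed.

End LocalRing.

Theorem corollary3p14 (R : comNzRingType) (X M : lmodType R) (N : X -> Prop) (t : nat) :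
  noetherian R -> local_ring R ->
  fin_gen X -> submodule N -> burch N ->
  (1 <= t)%N -> fin_gen M ->
  (forall F : free_res M, tor_vanish F N t /\ tor_vanish F N t.+1) ->
  pd_lt M t.
Proof.
move=> noethR locR _ SN BN t_gt0 fgM tor.
have [F minF] := exists_minimal_res noethR fgM.
case: t t_gt0 tor => [//|s] _ /(_ F) [tor1 tor2].
exists F => i le_si; apply: (minimal_res_rk0_ge locR minF _ le_si).
exact: (tor_vanish_rk0 SN minF BN tor1 tor2).
Qed.
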